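(* Assume inhibitory coupling ($\varepsilon_{ij}\le 0$ for all $i,j$ and $\varepsilon<0$); no assumption is made on the connectivity. Then for every ordering $\mathcal O$ and every $\boldsymbol\delta\in\mathbb R^N$, $$\max_i\big|(A(\mathcal O)\boldsymbol\delta)_i\big|\le\max_i|\delta_i|.$$ Consequently, for any sequence of orderings $\mathcal O_1,\mathcal O_2,\dots$, the iterates $\boldsymbol\delta(l)=A(\mathcal O_l)\boldsymbol\delta(l-1)$ satisfy $\|\boldsymbol\delta(l)\|_\infty\le\|\boldsymbol\delta(0)\|_\infty$ for all $l\in\mathbb N$.
   Context: Let $U$ be a twice continuously differentiable, strictly increasing function on an interval $I\subseteq\mathbb R$ containing $(-\infty,1]$. Assume $U'>0$ and $U''<0$ on $I$, $U(0)=0$ and $U(1)=1$. Fix $N\ge 2$ and a delay $\tau\in(0,1)$. For each $i$ fix a nonempty set $\mathrm{Pre}(i)\subseteq\{1,\dots,N\}\setminus\{i\}$ and put $k_i=|\mathrm{Pre}(i)|$. Fix real couplings $\varepsilon_{ij}$ with $\varepsilon_{ij}\neq0$ if and only if $j\in\mathrm{Pre}(i)$, normalized so that $\sum_j\varepsilon_{ij}=\varepsilon$ for every $i$. An ordering $\mathcal O$ is a choice, for each $i$, of an enumeration $j_1(i),\dots,j_{k_i}(i)$ of $\mathrm{Pre}(i)$. For $n\in\{0,\dots,k_i\}$ define $$p_{i,n}=\frac{U'\Big(U^{-1}\big(U(\tau)+\sum_{m=1}^{n}\varepsilon_{ij_m(i)}\big)\Big)}{U'\big(U^{-1}(U(\tau)+\varepsilon)\big)}.$$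 The stability matrix $A(\mathcal O)$ has entries - $A_{ii}=p_{i,0}$; - $A_{ij}=p_{i,n}-p_{i,n-1}$ if $j=j_n(i)$; - $A_{ij}=0$ if $j\notin\mathrm{Pre}(i)\cup\{i\}$. *)

From Stdlib Require Import Reals Lra List.
Import ListNotations.
Open Scope R_scope.

(* Neurons are indexed 0..N-1 (the paper uses 1..N). *)

Definition sumR (l : list nat) (f : nat -> R) : R :=
  fold_right (fun j acc => f j + acc) 0 l.

(* max_i |x_i| over i = 0..N-1 (N >= 2 so the max is over a nonempty set;
   the seed 0 is harmless since all entries are >= 0) *)
Definition infnorm (N : nat) (x : nat -> R) : R :=
  fold_right Rmax 0 (map (fun i => Rabs (x i)) (seq 0 N)).

Definition matvec (N : nat) (A : nat -> nat -> R) (x : nat -> R) : nat -> R :=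
  fun i => sumR (seq 0 N) (fun j => A i j * x j).

Definition pfun (U Uinv dU : R -> R) (tau epsT s : R) : R :=
  dU (Uinv (U tau + s)) / dU (Uinv (U tau + epsT)).

Definition p (U Uinv dU : R -> R) (tau epsT : R) (eps : nat -> nat -> R)
  (O : nat -> list nat) (i n : nat) : R :=
  pfun U Uinv dU tau epsT (sumR (firstn n (O i)) (eps i)).

(* index (1-based) of j in the list l, if present: Some n with j = j_n *)
Fixpoint pos1 (j : nat) (l : list nat) : option nat :=
  match l with
  | [] => None
  | k :: l' => if Nat.eqb j k then Some 1%nat
               else match pos1 j l' with Some n => Some (S n) | None => None end
  end.

Definition Amat (U Uinv dU : R -> R) (tau epsT : R) (eps : nat -> nat -> R)
  (O : nat -> list nat) (i j : nat) : R :=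
  if Nat.eqb i j then p U Uinv dU tau epsT eps O i 0
  else match pos1 j (O i) with
       | Some n => p U Uinv dU tau epsT eps O i n - p U Uinv dU tau epsT eps O i (n - 1)
       | None => 0
       end.

Definition is_ordering (N : nat) (Pre : nat -> nat -> Prop) (O : nat -> list nat) : Prop :=
  forall i, (i < N)%nat -> NoDup (O i) /\ (forall j, In j (O i) <-> Pre i j).

Fixpoint iterA (N : nat) (U Uinv dU : R -> R) (tau epsT : R) (eps : nat -> nat -> R)
  (Os : nat -> nat -> list nat) (delta0 : nat -> R) (l : nat) : nat -> R :=
  match l with
  | O => delta0
  | S l' => matvec N (Amat U Uinv dU tau epsT eps (Os (S l')))
                     (iterA N U Uinv dU tau epsT eps Os delta0 l')
  end.

From Stdlib Require Import Reals Lra Lia List Permutation Ranalysis5.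
Import ListNotations.
Open Scope R_scope.

(* Write F = pfun U Uinv dU tau epsT, so that p_{i,n} = F (s_n) where s_n is
   the n-th partial coupling sum along the enumeration O i of Pre(i).  Under
   inhibition the partial sums decrease from s_0 = 0 to s_{k_i} = epsT, and F
   is nonincreasing on (-oo, 0]: s |-> U^{-1}(U tau + s) is nondecreasing with
   values in (-oo, tau], where U' is positive and decreasing (U'' < 0).  Hence
   row i of A(O) has nonnegative entries F 0, F(s_1) - F(s_0), ... which
   telescope to F epsT = 1, so |(A(O) delta)_i| <= max_j |delta_j|. *)

Lemma sumR_perm l1 l2 f : Permutation l1 l2 -> sumR l1 f = sumR l2 f.
Proof. induction 1; simpl; lra. Qed.

Lemma sumR_ext_in l f g :
  (forall j, In j l -> f j = g j) -> sumR l f = sumR l g.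
Proof.
  induction l as [|a l IH]; simpl; intros H; [lra|].
  rewrite H, IH by auto; reflexivity.
Qed.

Lemma sumR_zero l f : (forall j, In j l -> f j = 0) -> sumR l f = 0.
Proof.
  induction l as [|a l IH]; simpl; intros H; [lra|].
  rewrite H, IH by auto; lra.
Qed.

Lemma sumR_nonpos l f : (forall j, In j l -> f j <= 0) -> sumR l f <= 0.
Proof.
  induction l as [|a l IH]; simpl; intros H; [lra|].
  pose proof (H a (or_introl eq_refl)).
  pose proof (IH (fun j h => H j (or_intror h))); lra.
Qed.

Lemma sumR_filter l b f :
  sumR l f = sumR (filter b l) f + sumR (filter (fun x => negb (b x)) l) f.
Proof. induction l as [|a l IH]; simpl; [lra|]. destruct (b a); simpl; lra. Qed.

Lemma sumR_support N L f :
  NoDup L -> (forall j, In j L -> (j < N)%nat) ->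
  (forall j, (j < N)%nat -> ~ In j L -> f j = 0) ->
  sumR (seq 0 N) f = sumR L f.
Proof.
  intros HL HLN Hf.
  set (inL := fun j => if in_dec Nat.eq_dec j L then true else false).
  rewrite (sumR_filter _ inL), (sumR_zero (filter (fun x => negb (inL x)) _)).
  2:{ intros j Hj. apply filter_In in Hj as [Hj1 Hj2]. apply in_seq in Hj1.
      unfold inL in Hj2. destruct (in_dec Nat.eq_dec j L); try discriminate.
      apply Hf; [lia|assumption]. }
  rewrite Rplus_0_r. apply sumR_perm, NoDup_Permutation.
  - apply NoDup_filter, seq_NoDup.
  - exact HL.
  - intros x; rewrite filter_In, in_seq; unfold inL.
    destruct (in_dec Nat.eq_dec x L) as [Hx|Hx]; split; try tauto.
    + intros _. specialize (HLN x Hx). split; [lia|reflexivity].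
    + intros [_ H]; discriminate.
Qed.

Lemma pos1_in j l : In j l -> exists n, pos1 j l = Some (S n).
Proof.
  induction l as [|k l IH]; simpl; [tauto|]. intros H.
  destruct (Nat.eqb_spec j k); [exists 0%nat; reflexivity|].
  destruct H as [H|H]; [congruence|].
  destruct (IH H) as [m Hm]. rewrite Hm. eauto.
Qed.

Lemma pos1_notin j l : ~ In j l -> pos1 j l = None.
Proof.
  induction l as [|k l IH]; simpl; auto. intros H.
  destruct (Nat.eqb_spec j k); [exfalso; auto|].
  rewrite IH; auto.
Qed.

Lemma infnorm_ge N x i : (i < N)%nat -> Rabs (x i) <= infnorm N x.
Proof.
  unfold infnorm. intros Hi.
  assert (Hin : In i (seq 0 N)) by (apply in_seq; lia).
  revert Hin. generalize (seq 0 N). induction l as [|a l IH]; simpl; [tauto|].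
  intros [->|H]; [apply Rmax_l|].
  eapply Rle_trans; [apply IH; auto|apply Rmax_r].
Qed.

Lemma infnorm_nonneg N x : 0 <= infnorm N x.
Proof.
  unfold infnorm. generalize (seq 0 N). induction l as [|a l IH]; simpl; [lra|].
  eapply Rle_trans; [apply IH|apply Rmax_r].
Qed.

Lemma infnorm_le N x M :
  0 <= M -> (forall i, (i < N)%nat -> Rabs (x i) <= M) -> infnorm N x <= M.
Proof.
  unfold infnorm. intros HM H.
  assert (H' : forall i, In i (seq 0 N) -> Rabs (x i) <= M)
    by (intros i Hi; apply in_seq in Hi; apply H; lia).
  revert H'. generalize (seq 0 N).
  induction l as [|a l IH]; simpl; intros H'; [lra|].
  apply Rmax_lub; auto.
Qed.

Section Telescoping.
Variable F : R -> R.
Hypothesis F_antitone : forall s1 s2, s1 <= s2 <= 0 -> F s2 <= F s1.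
Variable e : nat -> R.

Definition step_coef (l : list nat) (c : R) (j : nat) : R :=
  match pos1 j l with
  | Some n => F (c + sumR (firstn n l) e) - F (c + sumR (firstn (n - 1) l) e)
  | None => 0
  end.

Lemma step_coef_head k l c : step_coef (k :: l) c k = F (c + e k) - F c.
Proof. unfold step_coef; simpl. rewrite Nat.eqb_refl; simpl. now rewrite !Rplus_0_r. Qed.

Lemma step_coef_tail k l c j :
  j <> k -> In j l -> step_coef (k :: l) c j = step_coef l (c + e k) j.
Proof.
  intros Hjk Hj. unfold step_coef; simpl.
  destruct (Nat.eqb_spec j k) as [|_]; [contradiction|].
  destruct (pos1_in _ _ Hj) as [m ->]. simpl. rewrite Nat.sub_0_r.
  change (match l with [] => [] | a :: l0 => a :: firstn m l0 end)
    with (firstn (S m) l).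
  now rewrite !Rplus_assoc.
Qed.

(* With nonpositive couplings all coefficients are nonnegative and sum to
   F (c + sum e) - F c, which bounds the weighted sum of any |d j| <= M. *)
Lemma telescoping_bound l c d M :
  NoDup l -> (forall j, In j l -> e j <= 0) ->
  (forall j, In j l -> Rabs (d j) <= M) -> c <= 0 ->
  Rabs (sumR l (fun j => step_coef l c j * d j)) <= (F (c + sumR l e) - F c) * M.
Proof.
  revert c. induction l as [|k l IH]; intros c Hnd He Hd Hc; simpl.
  - rewrite Rabs_R0, Rplus_0_r. lra.
  - inversion Hnd as [|? ? Hk Hnd']; subst.
    assert (Hek : e k <= 0) by (apply He; left; reflexivity).
    assert (Hs : sumR l e <= 0) by (apply sumR_nonpos; intros; apply He; right; auto).
    rewrite step_coef_head.
    rewrite (sumR_ext_in l _ (fun j => step_coef l (c + e k) j * d j)).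
    2:{ intros j Hj. rewrite step_coef_tail; auto. intros ->; contradiction. }
    pose proof (IH (c + e k) Hnd' (fun j h => He j (or_intror h))
                   (fun j h => Hd j (or_intror h)) ltac:(lra)) as IHk.
    assert (F1 : F c <= F (c + e k)) by (apply F_antitone; lra).
    assert (F2 : F (c + e k) <= F (c + e k + sumR l e)) by (apply F_antitone; lra).
    assert (Hdk : Rabs (d k) <= M) by (apply Hd; left; reflexivity).
    assert (0 <= M) by (eapply Rle_trans; [apply Rabs_pos|exact Hdk]).
    assert ((F (c + e k) - F c) * Rabs (d k) <= (F (c + e k) - F c) * M)
      by (apply Rmult_le_compat_l; lra).
    replace (c + (e k + sumR l e)) with (c + e k + sumR l e) by lra.
    eapply Rle_trans; [apply Rabs_triang|].
    rewrite Rabs_mult, (Rabs_right (F _ - _)) by lra. lra.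
Qed.

(* A row "F 0 on the diagonal, telescoping steps along L" with total coupling
   epsT and F epsT = 1 has nonnegative entries summing to 1. *)
Lemma telescoping_row_bound L epsT d M i :
  F epsT = 1 -> 0 <= F 0 -> NoDup L -> (forall j, In j L -> e j <= 0) ->
  sumR L e = epsT -> (forall j, In j (i :: L) -> Rabs (d j) <= M) ->
  Rabs (F 0 * d i + sumR L (fun j => step_coef L 0 j * d j)) <= M.
Proof.
  intros HF1 HF0 Hnd He Hsum Hd.
  assert (Hsteps := telescoping_bound L 0 d M Hnd He
                      (fun j h => Hd j (or_intror h)) (Rle_refl 0)).
  rewrite Rplus_0_l, Hsum, HF1 in Hsteps.
  assert (Hdi : Rabs (d i) <= M) by (apply Hd; left; reflexivity).
  assert (F 0 * Rabs (d i) <= F 0 * M) by (apply Rmult_le_compat_l; auto).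
  eapply Rle_trans; [apply Rabs_triang|].
  rewrite Rabs_mult, (Rabs_right (F 0)) by lra. lra.
Qed.

End Telescoping.

Section Utility.
Variables (I : R -> Prop) (U dU ddU Uinv : R -> R).
Hypothesis I_below_one : forall x, x <= 1 -> I x.
Hypothesis U_deriv : forall x, interior I x -> derivable_pt_lim U x (dU x).
Hypothesis dU_deriv : forall x, interior I x -> derivable_pt_lim dU x (ddU x).
Hypothesis U_incr : forall x y, I x -> I y -> x < y -> U x < U y.
Hypothesis dU_pos : forall x, interior I x -> 0 < dU x.
Hypothesis ddU_neg : forall x, interior I x -> ddU x < 0.
Hypothesis U_0 : U 0 = 0.
Hypothesis Uinv_spec :
  forall y, (exists x, I x /\ U x = y) -> I (Uinv y) /\ U (Uinv y) = y.
Variable tau : R.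
Hypothesis tau_range : 0 < tau < 1.

Lemma interior_below_one x : x < 1 -> interior I x.
Proof.
  intros Hx. exists (mkposreal (1 - x) ltac:(lra)).
  intros y Hy. unfold disc in Hy; simpl in Hy.
  apply I_below_one. apply Rabs_def2 in Hy. lra.
Qed.

(* U' is strictly decreasing below 1 (mean value theorem with U'' < 0). *)
Lemma dU_decreasing a b : a < b -> b < 1 -> dU b < dU a.
Proof.
  intros Hab Hb. destruct (MVT_cor2 dU ddU a b Hab) as [c [Hc1 Hc2]].
  { intros c Hc. apply dU_deriv, interior_below_one. lra. }
  assert (ddU c < 0) by (apply ddU_neg, interior_below_one; lra). nra.
Qed.

Lemma U_below_tangent x : x < 0 -> U x <= dU 0 * x.
Proof.
  intros Hx. destruct (MVT_cor2 U dU x 0 Hx) as [c [Hc1 Hc2]].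
  { intros c Hc. apply U_deriv, interior_below_one. lra. }
  assert (dU 0 < dU c) by (apply dU_decreasing; lra). nra.
Qed.

(* Every value U(tau) + s with s <= 0 is attained on I (so U^{-1} applies):
   U is continuous and unbounded below by the tangent bound. *)
Lemma U_onto_below y : y <= U tau -> exists x, I x /\ U x = y.
Proof.
  intros [Hy| ->].
  2:{ exists tau. split; auto. apply I_below_one; lra. }
  assert (HdU0 : 0 < dU 0) by (apply dU_pos, interior_below_one; lra).
  set (a := Rmin (-1) (y / dU 0 - 1)).
  assert (Ha : a < 0) by (unfold a; pose proof (Rmin_l (-1) (y / dU 0 - 1)); lra).
  assert (Ha2 : dU 0 * a <= y - dU 0).
  { unfold a. pose proof (Rmin_r (-1) (y / dU 0 - 1)).
    replace (y - dU 0) with (dU 0 * (y / dU 0 - 1)) by (field; lra).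
    apply Rmult_le_compat_l; lra. }
  assert (HUa : U a < y) by (pose proof (U_below_tangent a Ha); lra).
  destruct (IVT_interv (fun x => U x - y) a tau) as [z [Hz1 Hz2]];
    [|lra|lra|lra|].
  - intros x Hx. apply continuity_pt_minus; [|apply continuity_pt_const; now intros ? ?].
    apply derivable_continuous_pt. exists (dU x).
    apply U_deriv, interior_below_one; lra.
  - exists z. split; [apply I_below_one; lra|lra].
Qed.

Definition shifted_point (s : R) : R := Uinv (U tau + s).

Lemma shifted_point_spec s :
  s <= 0 -> I (shifted_point s) /\ U (shifted_point s) = U tau + s /\
            shifted_point s <= tau.
Proof.
  intros Hs. destruct (Uinv_spec (U tau + s)) as [HI HU];
    [apply U_onto_below; lra|].
  unfold shifted_point. repeat split; auto.
  destruct (Rle_lt_dec (Uinv (U tau + s)) tau) as [|Hlt]; auto.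
  exfalso. assert (U tau < U (Uinv (U tau + s)))
    by (apply U_incr; auto; apply I_below_one; lra). lra.
Qed.

Lemma shifted_point_monotone s1 s2 :
  s1 <= s2 <= 0 -> shifted_point s1 <= shifted_point s2.
Proof.
  intros Hs.
  destruct (shifted_point_spec s1 ltac:(lra)) as [I1 [U1 _]].
  destruct (shifted_point_spec s2 ltac:(lra)) as [I2 [U2 _]].
  destruct (Rle_lt_dec (shifted_point s1) (shifted_point s2)) as [|Hlt]; auto.
  exfalso. assert (U (shifted_point s2) < U (shifted_point s1)) by (apply U_incr; auto).
  lra.
Qed.

Lemma dU_shifted_pos s : s <= 0 -> 0 < dU (shifted_point s).
Proof.
  intros Hs. apply dU_pos, interior_below_one.
  destruct (shifted_point_spec s Hs) as [_ [_ ?]]. lra.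
Qed.

Lemma dU_shifted_antitone s1 s2 :
  s1 <= s2 <= 0 -> dU (shifted_point s2) <= dU (shifted_point s1).
Proof.
  intros Hs. destruct (shifted_point_spec s2 ltac:(lra)) as [_ [_ Htau2]].
  destruct (shifted_point_monotone s1 s2 Hs) as [Hlt|Heq].
  - left. apply dU_decreasing; lra.
  - rewrite Heq. lra.
Qed.

Variable epsT : R.
Hypothesis epsT_nonpos : epsT <= 0.

Lemma pfun_antitone s1 s2 :
  s1 <= s2 <= 0 -> pfun U Uinv dU tau epsT s2 <= pfun U Uinv dU tau epsT s1.
Proof.
  intros Hs. unfold pfun, Rdiv. apply Rmult_le_compat_r.
  - left. apply Rinv_0_lt_compat, dU_shifted_pos, epsT_nonpos.
  - now apply dU_shifted_antitone.
Qed.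

Lemma pfun_total : pfun U Uinv dU tau epsT epsT = 1.
Proof.
  unfold pfun. pose proof (dU_shifted_pos epsT epsT_nonpos).
  unfold shifted_point in *. field. lra.
Qed.

Lemma pfun_zero_nonneg : 0 <= pfun U Uinv dU tau epsT 0.
Proof.
  left. apply Rdiv_lt_0_compat; apply dU_shifted_pos; lra.
Qed.

End Utility.

Section StabilityMatrix.
Variables (U Uinv dU : R -> R) (tau epsT : R).
Variables (N : nat) (Pre : nat -> nat -> Prop) (eps : nat -> nat -> R).
Hypothesis Pre_range : forall i j, (i < N)%nat -> Pre i j -> (j < N)%nat /\ j <> i.
Hypothesis eps_support :
  forall i j, (i < N)%nat -> (j < N)%nat -> (eps i j <> 0 <-> Pre i j).
Hypothesis eps_total : forall i, (i < N)%nat -> sumR (seq 0 N) (eps i) = epsT.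

Let F := pfun U Uinv dU tau epsT.

Lemma coupling_sum_along_ordering O i :
  is_ordering N Pre O -> (i < N)%nat -> sumR (O i) (eps i) = epsT.
Proof.
  intros HO Hi. destruct (HO i Hi) as [Hnd HinO].
  rewrite <- (eps_total i Hi). symmetry. apply sumR_support; auto.
  - intros j Hj. apply (Pre_range i j Hi), HinO, Hj.
  - intros j Hj Hn. destruct (Req_dec (eps i j) 0) as [|Hne]; auto.
    exfalso. apply Hn, HinO, (eps_support i j Hi Hj), Hne.
Qed.

Lemma Amat_row O delta i :
  is_ordering N Pre O -> (i < N)%nat ->
  matvec N (Amat U Uinv dU tau epsT eps O) delta i =
  F 0 * delta i + sumR (O i) (fun j => step_coef F (eps i) (O i) 0 j * delta j).
Proof.
  intros HO Hi. destruct (HO i Hi) as [Hnd HinO].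
  assert (HOlt : forall j, In j (O i) -> (j < N)%nat /\ j <> i)
    by (intros j Hj; apply Pre_range, HinO; auto).
  assert (HiO : ~ In i (O i)) by (intros H; now destruct (HOlt i H)).
  unfold matvec. rewrite (sumR_support N (i :: O i)).
  - simpl. unfold Amat at 1. rewrite Nat.eqb_refl. f_equal.
    apply sumR_ext_in. intros j Hj. unfold Amat, step_coef.
    destruct (Nat.eqb_spec i j); [subst; contradiction|].
    destruct (pos1 j (O i)); [|reflexivity].
    unfold p. fold F. now rewrite !Rplus_0_l.
  - constructor; auto.
  - intros j [<-|Hj]; [auto|apply HOlt; auto].
  - intros j Hj Hn. unfold Amat. destruct (Nat.eqb_spec i j) as [<-|].
    + exfalso. apply Hn. now left.
    + rewrite pos1_notin; [lra|]. intros H. apply Hn. now right.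
Qed.

Lemma Amat_contraction O delta :
  (forall s1 s2, s1 <= s2 <= 0 -> F s2 <= F s1) -> F epsT = 1 -> 0 <= F 0 ->
  (forall i j, (i < N)%nat -> (j < N)%nat -> eps i j <= 0) ->
  is_ordering N Pre O ->
  infnorm N (matvec N (Amat U Uinv dU tau epsT eps O) delta) <= infnorm N delta.
Proof.
  intros F_antitone F_total F_zero inhibitory HO.
  apply infnorm_le; [apply infnorm_nonneg|]. intros i Hi.
  destruct (HO i Hi) as [Hnd HinO].
  assert (HOlt : forall j, In j (O i) -> (j < N)%nat)
    by (intros j Hj; apply (Pre_range i j Hi), HinO, Hj).
  rewrite Amat_row by auto.
  apply (telescoping_row_bound F F_antitone (eps i) (O i) epsT); try assumption.
  - intros j Hj. apply inhibitory; auto.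
  - now apply coupling_sum_along_ordering.
  - intros j [<-|Hj]; apply infnorm_ge; auto.
Qed.

End StabilityMatrix.

Lemma iterA_bound N U Uinv dU tau epsT eps Os delta0 :
  (forall l delta, (1 <= l)%nat ->
     infnorm N (matvec N (Amat U Uinv dU tau epsT eps (Os l)) delta)
     <= infnorm N delta) ->
  forall l, infnorm N (iterA N U Uinv dU tau epsT eps Os delta0 l)
            <= infnorm N delta0.
Proof.
  intros Hstep l. induction l as [|l IH]; simpl; [lra|].
  eapply Rle_trans; [apply Hstep; lia|exact IH].
Qed.

Theorem mainTheorem5
  (* the function U on the interval I *)
  (I : R -> Prop) (U dU ddU Uinv : R -> R)
  (HIint : forall x y z, I x -> I z -> x <= y <= z -> I y)
  (HIcont : forall x, x <= 1 -> I x)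
  (HUd : forall x, interior I x -> derivable_pt_lim U x (dU x))
  (HUdd : forall x, interior I x -> derivable_pt_lim dU x (ddU x))
  (HUddc : forall x, interior I x -> continuity_pt ddU x)
  (HUincr : forall x y, I x -> I y -> x < y -> U x < U y)
  (HdUpos : forall x, interior I x -> 0 < dU x)
  (HddUneg : forall x, interior I x -> ddU x < 0)
  (HU0 : U 0 = 0) (HU1 : U 1 = 1)
  (* Uinv is the inverse of U on U(I) *)
  (HUinv : forall y, (exists x, I x /\ U x = y) -> I (Uinv y) /\ U (Uinv y) = y)
  (* network *)
  (N : nat) (HN : (2 <= N)%nat) (tau : R) (Htau : 0 < tau < 1)
  (Pre : nat -> nat -> Prop)
  (HPre : forall i j, (i < N)%nat -> Pre i j -> (j < N)%nat /\ j <> i)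
  (HPrene : forall i, (i < N)%nat -> exists j, Pre i j)
  (eps : nat -> nat -> R) (epsT : R)
  (Heps : forall i j, (i < N)%nat -> (j < N)%nat -> (eps i j <> 0 <-> Pre i j))
  (HepsT : forall i, (i < N)%nat -> sumR (seq 0 N) (eps i) = epsT)
  (* inhibitory coupling *)
  (Hinh : forall i j, (i < N)%nat -> (j < N)%nat -> eps i j <= 0)
  (HepsTneg : epsT < 0) :
  (forall (O : nat -> list nat) (delta : nat -> R),
      is_ordering N Pre O ->
      infnorm N (matvec N (Amat U Uinv dU tau epsT eps O) delta) <= infnorm N delta)
  /\
  (forall (Os : nat -> nat -> list nat) (delta0 : nat -> R),
      (forall l, (1 <= l)%nat -> is_ordering N Pre (Os l)) ->
      forall l : nat,
        infnorm N (iterA N U Uinv dU tau epsT eps Os delta0 l) <= infnorm N delta0).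
Proof.
  assert (HepsT0 : epsT <= 0) by lra.
  assert (Hcontr : forall O delta, is_ordering N Pre O ->
            infnorm N (matvec N (Amat U Uinv dU tau epsT eps O) delta)
            <= infnorm N delta).
  { intros O delta HO. apply (Amat_contraction _ _ _ _ _ _ Pre); auto.
    - intros s1 s2. apply (pfun_antitone I U dU ddU Uinv); auto.
    - apply (pfun_total I U dU ddU Uinv); auto.
    - apply (pfun_zero_nonneg I U dU ddU Uinv); auto. }
  split; [exact Hcontr|].
  intros Os delta0 HOs. apply iterA_bound.
  intros l delta Hl. apply Hcontr, HOs, Hl.
Qed.
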